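(* Let $X$ be a topological space, let $Y$ be a countable compact topological space, and let $f:X\times Y\to\overline{\mathbb R}$ be a separately continuous function. Then $(\wedge_f,\vee_f)$ is a stable pair of Hahn on $X$.
   Context: $\overline{\mathbb R}=[-\infty,+\infty]$ with its usual order topology. For $f:X\times Y\to\overline{\mathbb R}$ the minimal and maximal sections $\wedge_f,\vee_f:X\to\overline{\mathbb R}$ are $\wedge_f(x)=\inf_{y\in Y}f(x,y)$ and $\vee_f(x)=\sup_{y\in Y}f(x,y)$. $f$ is separately continuous if $y\mapsto f(x,y)$ is continuous for each $x\in X$ and $x\mapsto f(x,y)$ is continuous for each $y\in Y$. A pair $(g,h)$ of functions $g,h:X\to\overline{\mathbb R}$ is a stable pair of Hahn if there is a sequence of continuous functions $u_n:X\to\overline{\mathbb R}$ such that $g(x)=\min_{n\in\mathbb N}u_n(x)$ and $h(x)=\max_{n\in\mathbb N}u_n(x)$ for every $x\in X$ (the minimum and maximum being attained). *)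

From HB Require Import structures.
From mathcomp Require Import all_boot all_order all_algebra.
From mathcomp Require Import all_classical all_reals all_analysis.
Set Implicit Arguments. Unset Strict Implicit. Unset Printing Implicit Defensive.
Import Order.TTheory GRing.Theory Num.Theory.
Local Open Scope classical_set_scope.
Local Open Scope ereal_scope.

Definition min_section (R : realType) (X Y : Type) (f : X * Y -> \bar R)
  : X -> \bar R := fun x => ereal_inf (range (fun y => f (x, y))).

Definition max_section (R : realType) (X Y : Type) (f : X * Y -> \bar R)
  : X -> \bar R := fun x => ereal_sup (range (fun y => f (x, y))).

Definition separately_continuous (R : realType) (X Y : topologicalType)
  (f : X * Y -> \bar R) : Prop :=
  (forall x : X, continuous (fun y : Y => f (x, y))) /\
  (forall y : Y, continuous (fun x : X => f (x, y))).

Definition stable_Hahn_pair (R : realType) (X : topologicalType)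
  (g h : X -> \bar R) : Prop :=
  exists u : nat -> X -> \bar R,
    (forall n, continuous (u n)) /\
    (forall x : X,
      ((exists n, u n x = g x) /\ (forall n, g x <= u n x)) /\
      ((exists n, u n x = h x) /\ (forall n, u n x <= h x))).

From HB Require Import structures.
From mathcomp Require Import all_boot all_order all_algebra.
From mathcomp Require Import all_classical all_reals all_analysis.
Import Order.TTheory GRing.Theory Num.Theory.
Local Open Scope classical_set_scope.
Local Open Scope ereal_scope.

(* A continuous function on a compact space attains its infimum and supremum,
   and a countable space is the range of a sequence (y_n).  Hence the
   continuous functions u_n := f(., y_n) realise the minimal and maximal
   sections of f pointwise as a minimum and a maximum. *)

Lemma countable_nonempty_range (T : choiceType) (A : set T) (t0 : T) :
  A t0 -> countable A -> exists e : nat -> T, range e = A.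
Proof.
move=> At0 /countable_injP[h hinj].
pose e n := xget t0 [set t | A t /\ h t = n].
have eA n : A (e n) by rewrite /e; case: xgetP => [t _ []|].
exists e; apply/seteqP; split => [_ [n _ <-]|t At]; first exact: eA.
exists (h t) => //; rewrite /e; case: xgetP => [s _ [As hst]|/(_ t)[]//].
by apply: hinj; rewrite ?inE.
Qed.

Section compact_ereal.
Context {R : realType}.

Lemma compact_ereal_inf_mem (A : set (\bar R)) :
  A !=set0 -> compact A -> A (ereal_inf A).
Proof.
move=> A0 cA; apply: itv_closed_infimums => //.
  by apply: compact_closed => //; exact: ereal_hausdorff.
by split; [exact: ereal_inf_lbound | move=> M; exact: le_ereal_inf_tmp].
Qed.

Lemma compact_ereal_sup_mem (A : set (\bar R)) :
  A !=set0 -> compact A -> A (ereal_sup A).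
Proof.
move=> A0 cA; apply: itv_closed_supremums => //.
  by apply: compact_closed => //; exact: ereal_hausdorff.
by split; [exact: ereal_sup_ubound | move=> M; exact: ge_ereal_sup].
Qed.

Context {T : topologicalType}.

Lemma continuous_ereal_inf_attained (g : T -> \bar R) :
  [set: T] !=set0 -> compact [set: T] -> continuous g ->
  exists t, g t = ereal_inf (range g).
Proof.
move=> [t0 _] cT cg; have [t _ gt] : range g (ereal_inf (range g)).
  apply: compact_ereal_inf_mem; first by exists (g t0), t0.
  by apply: continuous_compact => //; exact: continuous_subspaceT.
by exists t.
Qed.

Lemma continuous_ereal_sup_attained (g : T -> \bar R) :
  [set: T] !=set0 -> compact [set: T] -> continuous g ->
  exists t, g t = ereal_sup (range g).
Proof.
move=> [t0 _] cT cg; have [t _ gt] : range g (ereal_sup (range g)).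
  apply: compact_ereal_sup_mem; first by exists (g t0), t0.
  by apply: continuous_compact => //; exact: continuous_subspaceT.
by exists t.
Qed.

End compact_ereal.

Theorem theorem2p1 (R : realType) (X Y : topologicalType)
  (f : X * Y -> \bar R) :
  [set: Y] !=set0 ->
  countable [set: Y] -> compact [set: Y] ->
  separately_continuous f ->
  stable_Hahn_pair (min_section f) (max_section f).
Proof.
move=> Y0 cY cpY [fy fx]; have [y0 _] := Y0.
have [e eY] := @countable_nonempty_range _ _ y0 I cY.
have eonto y : exists n, e n = y.
  have [n _ eny] : range e y by rewrite eY.
  by exists n.
exists (fun n x => f (x, e n)); split => [n|x]; first exact: fx.
rewrite /min_section /max_section; split; split.
- have [y fxy] := continuous_ereal_inf_attained _ Y0 cpY (fy x).
  by have [n eny] := eonto y; exists n; rewrite eny.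
- by move=> n; apply: ereal_inf_lbound; exists (e n).
- have [y fxy] := continuous_ereal_sup_attained _ Y0 cpY (fy x).
  by have [n eny] := eonto y; exists n; rewrite eny.
- by move=> n; apply: ereal_sup_ubound; exists (e n).
Qed.
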